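(* Let $M$ be a tall or square ACI-matrix over a field $\mathbb{F}$, and let $F_1,F_2$ be two disjoint semifactor sets of $M$. Then $F_1\cap F_2$ and $F_1\cup F_2$ are semifactor sets of $M$.
   Context: Let $\mathbb{F}$ be a field. An ACI-matrix is a matrix with entries in $\mathbb{F}[x_1,\dots,x_k]$ whose entries are polynomials of degree at most one and such that no indeterminate appears in two different columns. Tall/square means more rows than columns / equal numbers. A completion is an assignment of values in $\mathbb{F}$ to all indeterminates; $\mathrm{maxRank}(N)$ is the maximum rank of a completion. ACI-matrices (and blocks) of size $0\times q$ ($q>0$, wide degenerate), $p\times 0$ ($p>0$, tall degenerate) and $0\times0$ (void) are allowed. $N$ is FRmR if $\mathrm{maxRank}(N)=\mathrm{rows}(N)$, FCmR if $\mathrm{maxRank}(N)=\mathrm{cols}(N)$; by convention tall degenerate is FRmR, wide degenerate is FCmR, void is both. For an $m\times n$ block matrix $\begin{bmatrix} A & B\\ 0 & C\end{bmatrix}$ with lower-left $r\times s$ zero block, the zero block is Medium if $r+s=\max\{m,n\}$. For $F=\{f_1<\dots<f_s\}\subseteq\{1,\dots,n\}$ with complement $\{g_1<\dots<g_{n-s}\}$, $Q_F$ is the $n\times n$ permutation matrix such that $MQ_F$ has as columns $f_1,\dots,f_s,g_1,\dots,g_{n-s}$ of $M$ in that order. For an $m\times n$ ACI-matrix $M$, $F$ is a semifactor set of $M$ if there is a nonsingular constant $m\times m$ matrix $R$ with $RMQ_F=\begin{bmatrix} A & B\\ 0 & C\end{bmatrix}$, where $A$ has $\#F$ columns, the zero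 block is Medium, $A$ is FRmR and $C$ is FCmR. *)

From HB Require Import structures.
From mathcomp Require Import all_boot all_order all_algebra all_fingroup.
From mathcomp Require Import mpoly.
Set Implicit Arguments. Unset Strict Implicit. Unset Printing Implicit Defensive.
Import GRing.Theory.
Local Open Scope ring_scope.

(* ACI-matrices over a field K in k indeterminates x_0..x_{k-1}, represented
   as matrices with entries in {mpoly K[k]}. *)

Definition var_occurs (K : fieldType) (k : nat) (v : 'I_k) (p : {mpoly K[k]}) : Prop :=
  exists2 mm, mm \in msupp p & (0 < mm v)%N.

(* degree at most one *)
Definition deg_le1 (K : fieldType) (k : nat) (p : {mpoly K[k]}) : Prop :=
  (msize p <= 2)%N.

Definition is_ACI (K : fieldType) (k m n : nat) (M : 'M[{mpoly K[k]}]_(m, n)) : Prop :=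
  (forall i j, deg_le1 (M i j)) /\
  (forall (v : 'I_k) (i1 i2 : 'I_m) (j1 j2 : 'I_n),
      var_occurs v (M i1 j1) -> var_occurs v (M i2 j2) -> j1 = j2).

Definition completion (K : fieldType) (k m n : nat) (M : 'M[{mpoly K[k]}]_(m, n))
  (x : 'I_k -> K) : 'M[K]_(m, n) := map_mx (fun p => p.@[x]) M.

Definition is_maxRank (K : fieldType) (k m n : nat) (M : 'M[{mpoly K[k]}]_(m, n))
  (r : nat) : Prop :=
  (exists x, \rank (completion M x) = r) /\ (forall x, (\rank (completion M x) <= r)%N).

(* full row maximum rank; tall degenerate (p x 0, p>0) and void count as FRmR *)
Definition FRmR (K : fieldType) (k m n : nat) (M : 'M[{mpoly K[k]}]_(m, n)) : Prop :=
  n = 0%N \/ is_maxRank M m.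

(* full column maximum rank; wide degenerate (0 x q, q>0) and void count as FCmR *)
Definition FCmR (K : fieldType) (k m n : nat) (M : 'M[{mpoly K[k]}]_(m, n)) : Prop :=
  m = 0%N \/ is_maxRank M n.

(* the column order f_1 < ... < f_s, g_1 < ... < g_{n-s} *)
Definition colorder (n : nat) (F : {set 'I_n}) : seq 'I_n := enum F ++ enum (~: F).

(* Q_F : column j of M Q_F is column (nth j (colorder F) j) of M *)
Definition QF (R : pzRingType) (n : nat) (F : {set 'I_n}) : 'M[R]_n :=
  \matrix_(i, j) ((i == nth j (colorder F) j)%:R).

Definition semifactor (K : fieldType) (k m n : nat) (M : 'M[{mpoly K[k]}]_(m, n))
  (F : {set 'I_n}) : Prop :=
  exists (R : 'M[K]_m), R \in unitmx /\
  exists (p r t : nat) (eqm : (p + r)%N = m) (eqn : (#|F| + t)%N = n)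
    (A : 'M[{mpoly K[k]}]_(p, #|F|)) (B : 'M[{mpoly K[k]}]_(p, t))
    (C : 'M[{mpoly K[k]}]_(r, t)),
    map_mx (fun c => c%:MP) R *m M *m QF _ F = castmx (eqm, eqn) (block_mx A B 0 C)
    /\ (r + #|F|)%N = maxn m n
    /\ FRmR A /\ FCmR C.

From HB Require Import structures.
From mathcomp Require Import all_boot all_order all_algebra all_fingroup.
From mathcomp Require Import mpoly.
From mathcomp Require Import zify.
Set Implicit Arguments. Unset Strict Implicit. Unset Printing Implicit Defensive.
Import GRing.Theory.
Local Open Scope ring_scope.

(* For a tall M, F is a semifactor set exactly when M has full column maximum rank and
   the columns of M indexed by F lie in the K[x]-span of a constant matrix of rank at
   most #|F|: a constant nonsingular R then clears these columns below row #|F|, which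
   produces the zero block, and full rank of M forces the diagonal blocks to be of full
   rank.  Full rank of M itself follows from one semifactor set: the diagonal blocks A
   and C involve disjoint sets of indeterminates (ACI), so completions of maximal rank
   of A and C glue into one completion of the block triangular matrix, of rank n.  The
   span condition is additive: the columns of F1 :|: F2 lie in the span of the two
   constant matrices side by side, of rank at most #|F1| + #|F2| = #|F1 :|: F2|.  For
   disjoint sets F1 :&: F2 is empty and satisfies the span condition trivially. *)

Local Notation cmx A := (map_mx (fun c => c%:MP) A).

Section BlockRank.
Variable K : fieldType.

Lemma mxrank_col_mx_le m1 m2 n (A : 'M[K]_(m1, n)) (B : 'M[K]_(m2, n)) :
  (\rank (col_mx A B) <= \rank A + \rank B)%N.
Proof. by rewrite -addsmxE; exact: (mxrank_adds_leqif A B).1. Qed.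

Lemma mxrank_row_mx_le m n1 n2 (A : 'M[K]_(m, n1)) (B : 'M[K]_(m, n2)) :
  (\rank (row_mx A B) <= \rank A + \rank B)%N.
Proof. by rewrite -mxrank_tr tr_row_mx -(mxrank_tr A) -(mxrank_tr B) mxrank_col_mx_le. Qed.

Lemma mxrank_block_mx0_full q r t (A : 'M[K]_q) (B : 'M[K]_(q, t)) (C : 'M[K]_(r, t)) :
  \rank (block_mx A B 0 C) = (q + t)%N <-> \rank A = q /\ \rank C = t.
Proof.
split=> [rABC | [rA rC]].
  have le_A : (\rank (block_mx A B 0 C) <= \rank A + t)%N.
    rewrite block_mxEh; apply: leq_trans (mxrank_row_mx_le _ _) _.
    by rewrite rank_col_mx0 leq_add2l rank_leq_col.
  have le_C : (\rank (block_mx A B 0 C) <= q + \rank C)%N.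
    rewrite block_mxEv; apply: leq_trans (mxrank_col_mx_le _ _) _.
    by rewrite rank_row_0mx leq_add2r rank_leq_row.
  have := rank_leq_col A; have := rank_leq_col C; lia.
have /row_fullP [A' A'A] : row_full A by rewrite /row_full rA.
have /row_fullP [C' C'C] : row_full C by rewrite /row_full rC.
pose L := block_mx A' (- (A' *m B *m C')) 0 C'.
have L_inv : L *m block_mx A B 0 C = 1%:M.
  rewrite mulmx_block A'A C'C !mulmx0 !mul0mx addr0 !add0r.
  by rewrite mulNmx -!mulmxA C'C mulmx1 addrN -scalar_mx_block.
apply/eqP; rewrite eqn_leq rank_leq_col -{1}(mxrank1 K (q + t)) -L_inv.
exact: mxrankM_maxr.
Qed.

Lemma mxrank_castmx m1 n1 m2 n2 (e : (m1 = m2) * (n1 = n2)) (A : 'M[K]_(m1, n1)) :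
  \rank (castmx e A) = \rank A.
Proof. by case: e => e1 e2; subst; rewrite castmx_id. Qed.

Lemma mxrank_col_perm_unitM m n (R : 'M[K]_m) (s : 'S_n) (X : 'M[K]_(m, n)) :
  R \in unitmx -> \rank (col_perm s (R *m X)) = \rank X.
Proof.
move=> uR; rewrite col_permE mxrankMfree ?row_free_unit ?unitmx_perm //.
by rewrite eqmxMfull ?row_full_unit.
Qed.

Lemma mxrank_pid_mx_le m n d : (\rank (pid_mx d : 'M[K]_(m, n)) <= d)%N.
Proof. by rewrite -pid_mx_minv -pid_mx_minh rank_pid_mx; lia. Qed.

Lemma unitmx_lower_rows0 m p d (L : 'M[K]_(m, p)) : (\rank L <= d)%N ->
  exists2 R : 'M[K]_m, R \in unitmx & forall (i : 'I_m) j, (d <= i)%N -> (R *m L) i j = 0.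
Proof.
move=> rL; exists (invmx (col_ebase L)); first by rewrite unitmx_inv col_ebase_unit.
move=> i j le_d_i.
rewrite -[in R in (_ *m R)](mulmx_ebase L) !mulmxA mulVmx ?col_ebase_unit // mul1mx.
rewrite mxE big1 // => l _; rewrite mxE.
by rewrite ltnNge (leq_trans rL le_d_i) andbF mul0r.
Qed.
End BlockRank.

Lemma pid_mx_mul_id (R : pzRingType) m p d (Y : 'M[R]_(m, p)) :
  (forall (i : 'I_m) z, (d <= i)%N -> Y i z = 0) -> pid_mx d *m Y = Y.
Proof.
move=> Y0; apply/matrixP => i z; rewrite mxE (bigD1 i) //= mxE eqxx /=.
rewrite big1 => [|l nli]; last first.
  by rewrite mxE (_ : (i == l :> nat) = false) ?mul0r //; apply/negbTE; rewrite eq_sym.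
by case: ltnP => [_ | /Y0 ->]; rewrite ?mul1r ?mul0r addr0.
Qed.

Section ColumnOrder.
Variables (n : nat) (F : {set 'I_n}).

Lemma size_colorder : size (colorder F) = n.
Proof. by rewrite /colorder size_cat -!cardE cardsC card_ord. Qed.

Lemma uniq_colorder : uniq (colorder F).
Proof.
rewrite /colorder cat_uniq !enum_uniq andbT /=.
by apply/hasPn => j; rewrite !mem_enum inE => ->.
Qed.

Lemma nth_colorder_inj : injective (fun c : 'I_n => nth c (colorder F) c).
Proof.
move=> a b /= eq_ab; apply/val_inj/eqP.
have size_ab (c : 'I_n) : (c < size (colorder F))%N by rewrite size_colorder.
rewrite (set_nth_default a) ?size_ab // in eq_ab.
by rewrite -(nth_uniq a (size_ab a) (size_ab b) uniq_colorder) eq_ab.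
Qed.

Definition colorder_perm : 'S_n := perm nth_colorder_inj.

Lemma colorder_permE c : colorder_perm c = nth c (colorder F) c.
Proof. exact: permE. Qed.

Lemma mem_colorder_perm c : (colorder_perm c \in F) = (c < #|F|)%N.
Proof.
rewrite colorder_permE /colorder nth_cat -cardE.
have [lt_c_F | le_F_c] := ltnP c #|F|.
  by rewrite -mem_enum mem_nth -?cardE.
suff : nth c (enum (~: F)) (c - #|F|) \in ~: F by rewrite inE => /negbTE.
rewrite -mem_enum mem_nth // -cardE.
by have := ltn_ord c; have := cardsC F; rewrite card_ord; lia.
Qed.

Lemma QF_col_perm (R : pzRingType) m (X : 'M[R]_(m, n)) :
  X *m QF R F = col_perm colorder_perm X.
Proof.
rewrite col_permE; congr (_ *m _); apply/matrixP => i j.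
by rewrite !mxE -colorder_permE (canF_eq (permKV colorder_perm)).
Qed.
End ColumnOrder.

Section Completion.
Variables (K : fieldType) (k : nat).

Lemma completion_constM m p n (R : 'M[K]_(m, p)) (N : 'M[{mpoly K[k]}]_(p, n)) x :
  completion (cmx R *m N) x = R *m completion N x.
Proof.
rewrite /completion map_mxM; congr (_ *m _).
by apply/matrixP => i j; rewrite !mxE; exact: mevalC.
Qed.

Lemma completion_castmx_col_perm_constM m p n m' n' (e : (m = m') * (n = n'))
    (s : 'S_n) (R : 'M[K]_(m, p)) (N : 'M[{mpoly K[k]}]_(p, n)) x :
  completion (castmx e (col_perm s (cmx R *m N))) x =
    castmx e (col_perm s (R *m completion N x)).
Proof.
by rewrite {1}/completion map_castmx map_col_perm -/(completion _ x) completion_constM.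
Qed.

Lemma completion_block_mx p r q t
    (A : 'M[{mpoly K[k]}]_(p, q)) (B : 'M[{mpoly K[k]}]_(p, t))
    (C : 'M[{mpoly K[k]}]_(r, q)) (D : 'M[{mpoly K[k]}]_(r, t)) x :
  completion (block_mx A B C D) x =
    block_mx (completion A x) (completion B x) (completion C x) (completion D x).
Proof. exact: map_block_mx. Qed.

Lemma completion0 p q x : completion (0 : 'M[{mpoly K[k]}]_(p, q)) x = 0.
Proof. exact: map_mx0. Qed.

Lemma meval_eq_on_occurring (p : {mpoly K[k]}) (x y : 'I_k -> K) :
  (forall v, var_occurs v p -> x v = y v) -> p.@[x] = p.@[y].
Proof.
move=> eq_xy; rewrite !mevalE; apply: eq_big_seq => mm mm_p; congr (_ * _).
apply: eq_bigr => v _; have [-> | mm_v] := posnP (mm v); first by rewrite !expr0.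
by rewrite eq_xy //; exists mm.
Qed.

Lemma completion_glue m n (M : 'M[{mpoly K[k]}]_(m, n)) (F : {set 'I_n}) xF xC :
  is_ACI M -> exists x, forall i j, (M i j).@[x] = (M i j).@[if j \in F then xF else xC].
Proof.
case=> _ sep_vars.
pose occF v := [exists i, exists j, (j \in F) &&
  has (fun mm : 'X_{1..k} => (0 < mm v)%N) (msupp (M i j))].
have occFP v i j : j \in F -> var_occurs v (M i j) -> occF v.
  move=> jF [mm mm_M mm_v]; apply/existsP; exists i; apply/existsP; exists j.
  by rewrite jF; apply/hasP; exists mm.
exists (fun v => if occF v then xF v else xC v) => i j.
apply: meval_eq_on_occurring => v v_ij; have [jF | jNF] := boolP (j \in F).
  by rewrite (occFP v i j jF v_ij).
case: ifP => // /existsP [i2 /existsP [j2 /andP [j2F /hasP [mm mm_M mm_v]]]].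
have eq_j : j = j2 by apply: (sep_vars v i i2); last exists mm.
by rewrite eq_j j2F in jNF.
Qed.

Lemma is_maxRank_completion p q (A : 'M[{mpoly K[k]}]_(p, q)) x :
  \rank (completion A x) = q -> is_maxRank A q.
Proof. by split=> [|y]; [exists x | exact: rank_leq_col]. Qed.

Lemma full_rank_completion p q (A : 'M[{mpoly K[k]}]_(p, q)) :
  q = 0%N \/ is_maxRank A q -> exists x, \rank (completion A x) = q.
Proof.
case=> [q0 | [] //]; subst q; exists (fun=> 0).
by apply/eqP; rewrite -leqn0 rank_leq_col.
Qed.
End Completion.

Section Semifactor.
Variables (K : fieldType) (k m n : nat) (M : 'M[{mpoly K[k]}]_(m, n)).
Hypothesis tall : (n <= m)%N.

Definition lower_left_zero (N : 'M[{mpoly K[k]}]_(m, n)) (F : {set 'I_n}) : Prop :=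
  forall (i : 'I_m) j, j \in F -> (#|F| <= i)%N -> N i j = 0.

Definition const_colspan (F : {set 'I_n}) (d : nat) : Prop :=
  exists p (L : 'M[K]_(m, p)), (\rank L <= d)%N /\
    forall j, j \in F -> exists y : 'cV_p, col j M = cmx L *m y.

Section Blocks.
Variables (F : {set 'I_n}) (R : 'M[K]_m) (r t : nat).
Variables (em : (#|F| + r)%N = m) (en : (#|F| + t)%N = n).
Variables (A : 'M[{mpoly K[k]}]_#|F|) (B : 'M[{mpoly K[k]}]_(#|F|, t)).
Variable C : 'M[{mpoly K[k]}]_(r, t).
Hypothesis RMQ : cmx R *m M *m QF _ F = castmx (em, en) (block_mx A B 0 C).

Let RMQ_perm :
  castmx (esym em, esym en) (col_perm (colorder_perm F) (cmx R *m M)) = block_mx A B 0 C.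
Proof. by rewrite -QF_col_perm RMQ castmxK. Qed.

Lemma blocks_lower_left_zero : lower_left_zero (cmx R *m M) F.
Proof.
move=> i j jF le_F_i; pose c := ((colorder_perm F)^-1)%g j.
have lt_c_F : (c < #|F|)%N by rewrite -mem_colorder_perm permKV.
have lt_i_r : (i - #|F| < r)%N by have := ltn_ord i; lia.
have /matrixP/(_ (rshift #|F| (Ordinal lt_i_r)) (lshift t (Ordinal lt_c_F))) := RMQ_perm.
rewrite block_mxEdl castmxE mxE [X in _ = X -> _]mxE => <-.
apply: congr2; first by apply: val_inj; rewrite /= subnKC.
by rewrite -{1}(permKV (colorder_perm F) j); congr (_ _); apply: val_inj.
Qed.

Lemma blocks_full_rank : is_ACI M -> R \in unitmx ->
  (exists xA, \rank (completion A xA) = #|F|) ->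
  (exists xC, \rank (completion C xC) = t) ->
  exists x, \rank (completion M x) = n.
Proof.
move=> aci uR [xA rA] [xC rC]; have [x glue] := completion_glue F xA xC aci.
have glue_blocks i c : completion (block_mx A B 0 C) x i c =
    completion (block_mx A B 0 C) (if (c < #|F|)%N then xA else xC) i c.
  rewrite -!RMQ_perm !completion_castmx_col_perm_constM !castmxE !mxE.
  by apply: eq_bigr => l _; rewrite !mxE glue mem_colorder_perm.
have eq_A : completion A x = completion A xA.
  apply/matrixP => a b; have := glue_blocks (lshift r a) (lshift t b).
  by rewrite /= ltn_ord !completion_block_mx !block_mxEul.
have eq_C : completion C x = completion C xC.
  apply/matrixP => a b; have := glue_blocks (rshift #|F| a) (rshift #|F| b).
  by rewrite /= ltnNge leq_addr !completion_block_mx !block_mxEdr.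
have := iffRL (mxrank_block_mx0_full (completion A x) (completion B x) (completion C x)).
rewrite eq_A eq_C => /(_ (conj rA rC)); rewrite -eq_A -eq_C -(completion0 _ _ x).
rewrite -completion_block_mx -RMQ_perm completion_castmx_col_perm_constM.
by rewrite mxrank_castmx mxrank_col_perm_unitM // en; exists x.
Qed.
End Blocks.

Lemma lower_left_zero_semifactor F :
  semifactor M F -> exists2 R, R \in unitmx & lower_left_zero (cmx R *m M) F.
Proof.
move=> [R [uR [p [r [t [em [en [A [B [C [RMQ [card_r _]]]]]]]]]]]].
have eq_p : p = #|F| by move: card_r; rewrite (maxn_idPl tall); lia.
by subst p; exists R => //; exact: blocks_lower_left_zero RMQ.
Qed.

Lemma full_rank_semifactor F :
  is_ACI M -> semifactor M F -> exists x, \rank (completion M x) = n.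
Proof.
move=> aci [R [uR [p [r [t [em [en [A [B [C [RMQ [card_r [FA FC]]]]]]]]]]]]].
have eq_p : p = #|F| by move: card_r; rewrite (maxn_idPl tall); lia.
subst p; apply: blocks_full_rank RMQ aci uR _ _; apply: full_rank_completion => //.
by case: FC => [r0 | ]; [left; lia | right].
Qed.

Lemma const_colspan_lower_left_zero F R :
  R \in unitmx -> lower_left_zero (cmx R *m M) F -> const_colspan F #|F|.
Proof.
move=> uR llz; exists m, (invmx R *m pid_mx #|F|); split.
  by apply: leq_trans (mxrankM_maxr _ _) _; exact: mxrank_pid_mx_le.
move=> j jF; exists (col j (cmx R *m M)).
rewrite map_mxM -mulmxA map_pid_mx pid_mx_mul_id => [|i z le_F_i]; last first.
  by rewrite mxE llz.
by rewrite !colE !mulmxA -map_mxM mulVmx // map_mx1 mul1mx.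
Qed.

Lemma lower_left_zero_const_colspan F :
  const_colspan F #|F| -> exists2 R, R \in unitmx & lower_left_zero (cmx R *m M) F.
Proof.
case=> p [L [rL spanL]]; have [R uR RL0] := unitmx_lower_rows0 rL.
exists R => // i j jF le_F_i; have [y col_j] := spanL j jF.
have -> : (cmx R *m M) i j = (cmx R *m col j M) i 0.
  by rewrite colE mulmxA -colE [RHS]mxE.
rewrite col_j mulmxA -map_mxM mxE big1 // => l _.
by rewrite mxE RL0 // rmorph0 mul0r.
Qed.

Lemma const_colspan0 : const_colspan set0 0.
Proof. by exists 0%N, 0; split=> [|j]; rewrite ?mxrank0 ?inE. Qed.

Lemma const_colspanU F1 F2 d1 d2 :
  const_colspan F1 d1 -> const_colspan F2 d2 -> const_colspan (F1 :|: F2) (d1 + d2).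
Proof.
move=> [p1 [L1 [rL1 span1]]] [p2 [L2 [rL2 span2]]].
exists (p1 + p2)%N, (row_mx L1 L2); split.
  exact: leq_trans (mxrank_row_mx_le _ _) (leq_add rL1 rL2).
move=> j; rewrite inE => /orP [/span1 [y ->] | /span2 [y ->]].
  by exists (col_mx y 0); rewrite map_row_mx mul_row_col mulmx0 addr0.
by exists (col_mx 0 y); rewrite map_row_mx mul_row_col mulmx0 add0r.
Qed.

Lemma semifactor_lower_left_zero F R x : \rank (completion M x) = n ->
  R \in unitmx -> lower_left_zero (cmx R *m M) F -> semifactor M F.
Proof.
move=> rMx uR llz; exists R; split => //.
have le_F_n : (#|F| <= n)%N by rewrite -[n in (_ <= n)%N]card_ord max_card.
have le_F_m : (#|F| <= m)%N := leq_trans le_F_n tall.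
have em : (#|F| + (m - #|F|))%N = m by rewrite subnKC.
have en : (#|F| + (n - #|F|))%N = n by rewrite subnKC.
pose Y := castmx (esym em, esym en) (col_perm (colorder_perm F) (cmx R *m M)).
have Ydl : dlsubmx Y = 0.
  apply/matrixP => i c; rewrite !mxE castmxE mxE; apply: llz => /=.
    by rewrite mem_colorder_perm /= ltn_ord.
  by rewrite leq_addr.
have rY : \rank (completion Y x) = (#|F| + (n - #|F|))%N.
  rewrite completion_castmx_col_perm_constM mxrank_castmx mxrank_col_perm_unitM //.
  by rewrite rMx en.
exists #|F|, (m - #|F|)%N, (n - #|F|)%N, em, en, (ulsubmx Y), (ursubmx Y), (drsubmx Y).
split; first by rewrite QF_col_perm -Ydl submxK castmxKV.
split; first by rewrite (maxn_idPl tall) subnK.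
rewrite -(submxK Y) Ydl completion_block_mx completion0 in rY.
have [rA rC] := iffLR (mxrank_block_mx0_full _ _ _) rY.
by split; right; [exact: is_maxRank_completion rA | exact: is_maxRank_completion rC].
Qed.
End Semifactor.

Unset Implicit Arguments.

Theorem theorem5p4 (K : fieldType) (k m n : nat) (M : 'M[{mpoly K[k]}]_(m, n))
  (F1 F2 : {set 'I_n}) :
  is_ACI M -> (n <= m)%N ->
  [disjoint F1 & F2] ->
  semifactor M F1 -> semifactor M F2 ->
  semifactor M (F1 :&: F2) /\ semifactor M (F1 :|: F2).
Proof.
move=> aci tall disj sF1 sF2.
have [x rMx] := full_rank_semifactor tall aci sF1.
have colspan F : semifactor M F -> const_colspan M F #|F|.
  by case/(lower_left_zero_semifactor tall) => R; exact: const_colspan_lower_left_zero.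
have semifactorF F : const_colspan M F #|F| -> semifactor M F.
  by case/lower_left_zero_const_colspan => R; exact: semifactor_lower_left_zero rMx.
split; apply: semifactorF.
  by rewrite (disjoint_setI0 disj) cards0; exact: const_colspan0.
rewrite cardsU (disjoint_setI0 disj) cards0 subn0.
exact: const_colspanU (colspan _ sF1) (colspan _ sF2).
Qed.
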